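(* Let $G$ be a finitely generated group with growth function $g_G(n)$. Then $U_{W(G)}(n) \ge g_G(\lfloor n/2\rfloor)$ for all $n$.
   Context: For a finite generating set $X$ of $G$, $|g|_X$ is the length of a shortest word over $X\cup X^{-1}$ representing $g$, and $g_G(n)=|\{g\in G: |g|_X\le n\}|$ is the growth function. $W(G)=W(G,X)$ is the word problem language: the set of words over $X\cup X^{-1}$ representing the identity of $G$. A finite set $S$ of strings is uniformly $n$-dissimilar for a language $\mathtt{L}$ if for each $w\in S$ there is a string $v$ with $|wv|\le n$, $wv\in\mathtt{L}$, and for every $w'\in S$, $w'\neq w$, $|w'v|\le n$ and $w'v\notin\mathtt{L}$. $U_{\mathtt{L}}(n)$ is the maximum cardinality of a uniformly $n$-dissimilar set for $\mathtt{L}$. *)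

From HB Require Import structures.
From mathcomp Require Import all_boot.
From mathcomp Require Import finmap.

Set Implicit Arguments.
Unset Strict Implicit.
Unset Printing Implicit Defensive.

Local Open Scope fset_scope.
Local Open Scope group_scope.

(* Letters of the alphabet X ∪ X^{-1}: (x, false) stands for x, (x, true)
   for the formal inverse x^{-1}. *)
Definition letter (G : groupType) (X : {fset G}) := (X * bool)%type.

Definition eval_word (G : groupType) (X : {fset G}) (w : seq (letter X)) : G :=
  foldr (fun a g => (if a.2 then (val a.1)^-1 else val a.1) * g) 1 w.

Definition generates (G : groupType) (X : {fset G}) : Prop :=
  forall g : G, exists w : seq (letter X), eval_word w = g.

Definition word_problem (G : groupType) (X : {fset G}) : pred (seq (letter X)) :=
  fun w => eval_word w == 1.

Definition bword (A : finType) (n : nat) := {k : 'I_n.+1 & k.-tuple A}.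
Definition bw (A : finType) (n : nat) (u : bword A n) : seq A := val (tagged u).

Definition words_upto (A : finType) (n : nat) : seq (seq A) :=
  [seq bw u | u <- enum [set: bword A n]].

Definition word_length_le (G : groupType) (X : {fset G}) (g : G) (n : nat) : Prop :=
  exists w : seq (letter X), size w <= n /\ eval_word w = g.

Definition growth (G : groupType) (X : {fset G}) (n : nat) : nat :=
  size (undup [seq eval_word w | w <- words_upto (letter X) n]).

(* Since every w in S needs a v with |wv| <= n, all strings of S (and the
   witnesses v) have length <= n, so S ranges over subsets of [bword A n]. *)
Definition unif_dissimilar (A : finType) (L : pred (seq A)) (n : nat)
    (S : {set bword A n}) : bool :=
  [forall w in S, exists v : bword A n,
     [&& size (bw w ++ bw v) <= n, L (bw w ++ bw v) &
      [forall w' in S, (w' != w) ==>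
         ((size (bw w' ++ bw v) <= n) && ~~ L (bw w' ++ bw v))]]].

Definition U_L (A : finType) (L : pred (seq A)) (n : nat) : nat :=
  \max_(S : {set bword A n} | unif_dissimilar L S) #|S|%N.

Arguments word_problem {G} X.
Arguments growth {G} X n.
Arguments generates {G} X.
Arguments U_L {A} L n.

From HB Require Import structures.
From mathcomp Require Import all_boot.
From mathcomp Require Import finmap.

(* Choose one word of length at most n/2 for each element of the ball of
   radius n/2.  These words form a uniformly n-dissimilar set for W(G): the
   formal inverse v of a chosen word w gives |w v| <= n and w v in W(G),
   while w' v is not in W(G) for any other chosen word w', because w and w'
   represent distinct elements. *)

Local Open Scope group_scope.

Lemma uniq_map_inj_in {T1 T2 : eqType} {f : T1 -> T2} {s : seq T1} :
  uniq (map f s) -> {in s &, injective f}.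
Proof.
elim: s => //= x s IHs /andP[fx_notin uniq_fs] a b.
rewrite !inE => /predU1P[-> | a_s] /predU1P[-> | b_s] // e.
- by rewrite e map_f in fx_notin.
- by rewrite -e map_f in fx_notin.
- exact: IHs.
Qed.

Lemma undup_map_transversal {T1 T2 : eqType} (f : T1 -> T2) (s : seq T1) :
  exists2 t, {subset t <= s} & map f t = undup (map f s).
Proof.
elim: s => [|x s [t t_s ft]]; first by exists [::].
rewrite /=; case: ifP => [_ | fx_notin].
  by exists t => // y /t_s; rewrite inE orbC => ->.
exists (x :: t); last by rewrite /= ft.
by move=> y; rewrite !inE => /predU1P[-> | /t_s ->]; rewrite ?eqxx ?orbT.
Qed.

Section Words.
Variables (G : groupType) (X : {fset G}).
Implicit Types (w : seq (letter X)).

Definition inv_word w : seq (letter X) := rev (map (fun a => (a.1, ~~ a.2)) w).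

Lemma size_inv_word w : size (inv_word w) = size w.
Proof. by rewrite size_rev size_map. Qed.

Lemma eval_word_cat w w' : eval_word (w ++ w') = eval_word w * eval_word w'.
Proof. by elim: w => [|a w IHw] /=; rewrite ?mul1g // IHw mulgA. Qed.

Lemma eval_inv_word w : eval_word (inv_word w) = (eval_word w)^-1.
Proof.
elim: w => [|a w IHw] /=; first by rewrite invg1.
rewrite /inv_word map_cons rev_cons -cats1 eval_word_cat -/(inv_word w) IHw.
by rewrite /= mulg1 invgM; case: a.2; rewrite ?invgK.
Qed.

Lemma word_problem_cat_inv w w' :
  word_problem X (w' ++ inv_word w) = (eval_word w' == eval_word w).
Proof. by rewrite /word_problem eval_word_cat eval_inv_word mulg_eq1 invgK. Qed.

End Words.

Arguments inv_word {G X} w.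

Section BoundedWords.
Variable A : finType.

Lemma size_take_ltnS n (w : seq A) : size (take n w) < n.+1.
Proof. by rewrite size_take_min ltnS geq_minl. Qed.

Definition bword_of (n : nat) (w : seq A) : bword A n :=
  existT (fun k : 'I_n.+1 => k.-tuple A) (Ordinal (size_take_ltnS n w))
    (in_tuple (take n w)).

Lemma bw_bword_of n w : size w <= n -> bw (bword_of n w) = w.
Proof. by move=> w_n; rewrite /bw /= take_oversize. Qed.

Lemma bw_inj n : injective (@bw A n).
Proof.
case=> [k t] [k' t']; rewrite /bw /= => e.
have ek : k = k'.
  by apply: val_inj; rewrite /= -(size_tuple t) -(size_tuple t') e.
by subst k'; move/val_inj: e => ->.
Qed.

Lemma size_words_upto m w : w \in words_upto A m -> size w <= m.
Proof. by case/mapP=> -[k t] _ ->; rewrite /bw /= size_tuple -ltnS. Qed.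

Lemma size_le_card_bword n (t : seq (seq A)) :
  uniq t -> {in t, forall w, size w <= n} ->
  size t <= #|[set u : bword A n | bw u \in t]|.
Proof.
move=> uniq_t t_n; rewrite cardE -(size_map (@bw A n)).
apply: uniq_leq_size => // w w_t; apply/mapP; exists (bword_of n w).
  by rewrite mem_enum inE bw_bword_of ?t_n.
by rewrite bw_bword_of ?t_n.
Qed.

End BoundedWords.

Arguments bword_of {A} n w.
Arguments size_le_card_bword {A n t}.

Lemma half_add_half_leq n : n./2 + n./2 <= n.
Proof. by rewrite addnn halfK leq_subr. Qed.

Lemma unif_dissimilar_word_problem (G : groupType) (X : {fset G}) n
    (S : {set bword (letter X) n}) :
  {in S, forall u, size (bw u) <= n./2} ->
  {in S &, injective (fun u => eval_word (bw u))} ->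
  unif_dissimilar (word_problem X) S.
Proof.
move=> S_short S_inj; apply/forall_inP => u u_S; apply/existsP.
have size_cat_inv u' : u' \in S -> size (bw u' ++ inv_word (bw u)) <= n.
  move=> u'_S; rewrite size_cat size_inv_word.
  apply: leq_trans (half_add_half_leq n).
  exact: leq_add (S_short _ u'_S) (S_short _ u_S).
have inv_u_n : size (inv_word (bw u)) <= n.
  by apply: leq_trans (size_cat_inv _ u_S); rewrite size_cat leq_addl.
exists (bword_of n (inv_word (bw u))); rewrite bw_bword_of //.
rewrite size_cat_inv // word_problem_cat_inv eqxx /=.
apply/forall_inP => u' u'_S; apply/implyP => u'_neq_u.
rewrite size_cat_inv // word_problem_cat_inv /=.
by apply: contra u'_neq_u => /eqP/S_inj->.
Qed.

Theorem lemma4p3 (G : groupType) (X : {fset G}) :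
  generates X ->
  forall n : nat, growth X n./2 <= U_L (word_problem X) n.
Proof.
move=> _ n.
have [t t_ball eval_t] :=
  undup_map_transversal (@eval_word G X) (words_upto (letter X) n./2).
have uniq_eval_t : uniq (map (@eval_word G X) t) by rewrite eval_t undup_uniq.
have t_short w : w \in t -> size w <= n./2 by move/t_ball/size_words_upto.
have t_n w : w \in t -> size w <= n.
  move=> w_t; apply: leq_trans (t_short w w_t) _.
  exact: leq_trans (leq_addr _ _) (half_add_half_leq n).
rewrite /growth -eval_t size_map.
apply: leq_trans (size_le_card_bword (map_uniq uniq_eval_t) t_n) _.
apply: leq_bigmax_cond; apply: unif_dissimilar_word_problem.
  by move=> u; rewrite inE => /t_short.
move=> u u'; rewrite !inE => u_t u'_t eq_eval.
exact/bw_inj/(uniq_map_inj_in uniq_eval_t _ _ u_t u'_t).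
Qed.
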